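(* Let $(G,\alpha)$ be an edge-labeled graph with $n$ vertices $v_1,\dots,v_n$ over $\mathbb{Z}/m\mathbb{Z}$, let $1<i\le j\le n$, and let $\bar F^{(i)}=(\bar 0,\dots,\bar 0,\bar f^{(i)}_{v_i},\dots,\bar f^{(i)}_{v_n})\in\mathcal F_i$ be an $i$-th flow-up class. Let $L=\big[\bigcup_{k=1}^{i-1}\{(p^{(j,k)})\}\big]$ be the least common multiple of the greatest common divisors of all $v_k$-trails of $v_j$, over all $k=1,\dots,i-1$. If $L\not\equiv 0 \pmod m$, then $\bar f^{(i)}_{v_j}$ is a multiple of $L+m\mathbb{Z}$ in $\mathbb{Z}/m\mathbb{Z}$.
   Context: Let $m\ge 2$ and $G=(V,E)$ a finite simple connected graph with ordered vertices $v_1,\dots,v_n$. An edge-labeling $\alpha$ assigns to each edge a nonzero ideal of $\mathbb{Z}/m\mathbb{Z}$; each edge $e$ is labeled by the ideal $\alpha(e)=\langle l_e+m\mathbb{Z}\rangle$ generated by the class of a positive integer $l_e$, the integer representative (smallest positive integer of the coset) of the label. A spline on $(G,\alpha)$ is $F=(f_{v_1},\dots,f_{v_n})\in(\mathbb{Z}/m\mathbb{Z})^n$ with $f_{v_a}-f_{v_b}\in\alpha(v_av_b)$ for each edge $v_av_b$. An $i$-th flow-up class is a spline with $f_{v_i}\ne0$ and $f_{v_t}=0$ for $t<i$; $\mathcal F_i$ is the set of these. A trail is a sequence $w_0,e_1,w_1,\dots,e_r,w_r$ of vertices and edges, $e_s=w_{s-1}w_s$, in which no edge is repeated; a $v_k$-trail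 of $v_j$ is a trail from $v_j$ to $v_k$. For such a trail $p^{(j,k)}$, $(p^{(j,k)})$ denotes the greatest common divisor (in $\mathbb{Z}$) of the integer representatives $l_e$ of the edges on it; $\{(p^{(j,k)})\}$ is the set of these values over all $v_k$-trails of $v_j$; $[\,S\,]$ denotes the least common multiple of a finite set $S$ of integers. *)

From mathcomp Require Import all_boot all_order all_algebra.
Set Implicit Arguments. Unset Strict Implicit. Unset Printing Implicit Defensive.
Import GRing.Theory.
Local Open Scope ring_scope.

(* Vertices v_1..v_n are the ordinals 0..n-1 of 'I_n (v_{t+1} = t).
   The graph is a symmetric irreflexive relation [e] (simple graph); an edge
   is identified with the unordered pair [set a; b]. The label of the edge
   ab is the ideal generated by (l a b)%:R in 'Z_m, where l a b is the integer
   representative (1 <= l a b < m). *)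

Definition simple_graph n (e : rel 'I_n) : Prop :=
  irreflexive e /\ symmetric e.

Definition connected_graph n (e : rel 'I_n) : Prop :=
  forall x y, connect e x y.

Definition edge_labeling n (m : nat) (e : rel 'I_n) (l : 'I_n -> 'I_n -> nat) : Prop :=
  forall a b, e a b -> [/\ (0 < l a b)%N, (l a b < m)%N & l a b = l b a].

Definition in_ideal (m : nat) (x : 'Z_m) (d : nat) : Prop :=
  exists c : 'Z_m, x = c * d%:R.

Definition is_spline n m (e : rel 'I_n) (l : 'I_n -> 'I_n -> nat) (F : 'I_n -> 'Z_m) : Prop :=
  forall a b, e a b -> in_ideal (F a - F b) (l a b).

(* i-th flow-up class (i is 0-based here) *)
Definition flow_up n m (e : rel 'I_n) l (i : 'I_n) (F : 'I_n -> 'Z_m) : Prop :=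
  [/\ is_spline e l F, F i != 0 & forall t : 'I_n, (t < i)%N -> F t = 0].

Definition trail_edges n (x : 'I_n) (p : seq 'I_n) : seq ('I_n * 'I_n) :=
  zip (x :: p) p.

Definition is_trail n (e : rel 'I_n) (j k : 'I_n) (p : seq 'I_n) : bool :=
  [&& path e j p, last j p == k &
      uniq [seq [set pr.1; pr.2] | pr <- trail_edges j p]].

Definition trail_gcd n (l : 'I_n -> 'I_n -> nat) (j : 'I_n) (p : seq 'I_n) : nat :=
  foldr gcdn 0%N [seq l pr.1 pr.2 | pr <- trail_edges j p].

Definition all_seqs n (N : nat) : seq (seq 'I_n) :=
  flatten [seq [seq val t | t <- enum {: r.-tuple 'I_n}] | r <- iota 0 N].

(* A trail repeats no
   edge, and there are fewer than n*n edges, so its tail has length <= n*n;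
   hence enumerating sequences of length < (n*n).+1 lists all trails. *)
Definition trail_gcds n (e : rel 'I_n) l (j k : 'I_n) : seq nat :=
  [seq trail_gcd l j p | p <- all_seqs n (n * n).+1 & is_trail e j k p].

Definition trail_lcm n (e : rel 'I_n) l (i j : 'I_n) : nat :=
  \big[lcmn/1%N]_(k < n | (k < i)%N) \big[lcmn/1%N]_(d <- trail_gcds e l j k) d.

From mathcomp Require Import all_boot all_order all_algebra.
Import GRing.Theory.
Local Open Scope ring_scope.
Set Implicit Arguments. Unset Strict Implicit. Unset Printing Implicit Defensive.

(* Along a walk from v_j to v_k, the spline condition puts every consecutive
   difference of F in the ideal of its edge label, hence in the ideal of the
   gcd of all labels on the walk; telescoping, F v_j - F v_k lies in that
   ideal.  For k < i the flow-up class vanishes at v_k, so F v_j lies in the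
   ideal of every trail gcd.  In Z/mZ the ideal generated by d is the one
   generated by gcd(d, m), so the ideals generated by a and by b intersect in
   the ideal generated by lcm(a, b), and F v_j lies in the ideal of L. *)

Lemma in_ideal1 (m : nat) (x : 'Z_m) : in_ideal x 1.
Proof. by exists x; rewrite mulr1. Qed.

Lemma in_idealD (m : nat) (x y : 'Z_m) d :
  in_ideal x d -> in_ideal y d -> in_ideal (x + y) d.
Proof. by case=> c -> [c' ->]; exists (c + c'); rewrite mulrDl. Qed.

Lemma in_ideal_dvdn (m : nat) (x : 'Z_m) d d' :
  (d' %| d)%N -> in_ideal x d -> in_ideal x d'.
Proof. by case/dvdnP=> q -> [c ->]; exists (c * q%:R); rewrite natrM mulrA. Qed.

Lemma in_ideal_gcdn (m : nat) (x : 'Z_m) d :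
  (1 < m)%N -> in_ideal x d <-> (gcdn d m %| x)%N.
Proof.
move=> m_gt1; split=> [[c ->]|].
  rewrite -[c]natr_Zp -natrM val_Zp_nat //.
  by rewrite /dvdn (modn_dvdm _ (dvdn_gcdr _ _)) -/(dvdn _ _) dvdn_mull ?dvdn_gcdl.
case/dvdnP=> q x_eq.
have [a _ /dvdnP[k Bezout_k]] := Bezoutr d (ltnW m_gt1).
have gcd_multiple : (gcdn d m)%:R = - (a%:R * d%:R) :> 'Z_m.
  apply/eqP; rewrite -subr_eq0 opprK -natrM -natrD Bezout_k natrM.
  by rewrite -(Zp_nat_mod m_gt1 m) modnn mulr0.
exists (- (q%:R * a%:R)).
by rewrite -[x]natr_Zp x_eq natrM gcd_multiple mulrN mulNr mulrA.
Qed.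

Lemma in_ideal_lcmn (m : nat) (x : 'Z_m) a b : (1 < m)%N ->
  in_ideal x a -> in_ideal x b -> in_ideal x (lcmn a b).
Proof.
move=> m_gt1 /(in_ideal_gcdn _ _ m_gt1) xa /(in_ideal_gcdn _ _ m_gt1) xb.
by apply/(in_ideal_gcdn _ _ m_gt1); rewrite Order.NatDvd.meetUl dvdn_lcm xa xb.
Qed.

Lemma in_ideal_big_lcmn (m : nat) (x : 'Z_m) (I : eqType) (r : seq I)
    (P : pred I) (f : I -> nat) : (1 < m)%N ->
  (forall t, t \in r -> P t -> in_ideal x (f t)) ->
  in_ideal x (\big[lcmn/1%N]_(t <- r | P t) f t).
Proof.
move=> m_gt1 x_f; rewrite big_seq_cond.
apply: (big_ind (in_ideal x)); first exact: in_ideal1.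
  by move=> a b; apply: in_ideal_lcmn.
by move=> t /andP[]; apply: x_f.
Qed.

Lemma spline_path_in_ideal n m (e : rel 'I_n) l (F : 'I_n -> 'Z_m) j p :
  is_spline e l F -> path e j p ->
  in_ideal (F j - F (last j p)) (trail_gcd l j p).
Proof.
move=> F_spline; elim: p j => [|y p IHp] j /=.
  by move=> _; exists 0; rewrite subrr mul0r.
case/andP=> e_jy y_p.
rewrite -(subrK (F y) (F j)) -addrA.
apply: in_idealD.
  by apply: (in_ideal_dvdn (dvdn_gcdl _ _)); apply: F_spline.
by apply: (in_ideal_dvdn (dvdn_gcdr _ _)); apply: IHp.
Qed.

Lemma flow_up_trail_in_ideal n m (e : rel 'I_n) l (i j k : 'I_n)
    (F : 'I_n -> 'Z_m) p :
  flow_up e l i F -> (k < i)%N -> is_trail e j k p ->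
  in_ideal (F j) (trail_gcd l j p).
Proof.
case=> F_spline _ F_below k_lt_i /and3P[j_p /eqP p_end _].
rewrite -[F j]subr0 -(F_below k k_lt_i) -p_end.
exact: spline_path_in_ideal F_spline j_p.
Qed.

Theorem mainTheorem2 (m n : nat) (e : rel 'I_n) (l : 'I_n -> 'I_n -> nat)
    (i j : 'I_n) (F : 'I_n -> 'Z_m) :
  (1 < m)%N ->
  simple_graph e -> connected_graph e -> edge_labeling m e l ->
  (0 < i)%N -> (i <= j)%N ->
  flow_up e l i F ->
  ~~ (m %| trail_lcm e l i j)%N ->
  in_ideal (F j) (trail_lcm e l i j).
Proof.
move=> m_gt1 _ _ _ _ _ F_flow _.
apply: in_ideal_big_lcmn => // k _ k_lt_i.
apply: in_ideal_big_lcmn => // d /mapP[p].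
rewrite mem_filter => /andP[j_k_trail _] -> _.
exact: flow_up_trail_in_ideal F_flow k_lt_i j_k_trail.
Qed.
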